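(* Let $n\ge 2$. Suppose $\{a_i\}_{i=1}^k$ is a tight frame set for $\mathcal{H}_n$ and $b\ge 0$. Let $m=\max_{i=2,\dots,k}a_i^2$. Then $\{b,a_2,\dots,a_k\}$ is a tight frame set for $\mathcal{H}_n$ if and only if $$b^2\in\Big[\,nm-\sum_{i=2}^k a_i^2,\ \frac{1}{n-1}\sum_{i=2}^k a_i^2\,\Big].$$
   Context: $\mathcal{H}_n$ is an $n$-dimensional real or complex Hilbert space. A sequence of nonnegative numbers $\{a_i\}_{i=1}^k$ is a tight frame set for $\mathcal{H}_n$ if there exists a tight frame $\{f_i\}_{i=1}^k$ for $\mathcal{H}_n$ (i.e. vectors with $\sum_i|\langle f,f_i\rangle|^2=\lambda\|f\|^2$ for all $f$, for some $\lambda>0$) with $\|f_i\|=a_i$ for all $i$. *)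

From HB Require Import structures.
From mathcomp Require Import all_boot all_order all_algebra.
From mathcomp Require Import reals.
From mathcomp Require Import complex.
Set Implicit Arguments. Unset Strict Implicit. Unset Printing Implicit Defensive.
Import Order.TTheory GRing.Theory Num.Theory.
Local Open Scope ring_scope.

(* The n-dimensional Hilbert space H_n is modelled inside C^n = 'cV[R[i]]_n
   (R : realType, R[i] the complex numbers over R) with the standard inner
   product <x,y> = \sum_j x_j * conj(y_j).  The real Hilbert space R^n is the
   subset of vectors with all coordinates real (flag [real] = true), on which
   this inner product restricts to the usual real one. *)

Definition sqmod (R : realType) (z : R[i]) : R := (@complex.Re R z) ^+ 2 + (@complex.Im R z) ^+ 2.

Definition cdot (R : realType) (n : nat) (x y : 'cV[R[i]]_n) : R[i] :=
  \sum_(j < n) x j 0 * conjc (y j 0).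

Definition vnorm (R : realType) (n : nat) (x : 'cV[R[i]]_n) : R :=
  Num.sqrt (\sum_(j < n) sqmod (x j 0)).

Definition in_Hn (R : realType) (real : bool) (n : nat) (x : 'cV[R[i]]_n) : Prop :=
  real -> forall j, @complex.Im R (x j 0) = 0.

Definition tight_frame (R : realType) (real : bool) (n k : nat)
    (f : 'I_k -> 'cV[R[i]]_n) : Prop :=
  (forall i, in_Hn real (f i)) /\
  exists lam : R, 0 < lam /\
    forall x : 'cV[R[i]]_n, in_Hn real x ->
      \sum_(i < k) sqmod (cdot x (f i)) = lam * vnorm x ^+ 2.

Definition tight_frame_set (R : realType) (real : bool) (n k : nat)
    (a : 'I_k -> R) : Prop :=
  (forall i, 0 <= a i) /\
  exists f : 'I_k -> 'cV[R[i]]_n, tight_frame real f /\ forall i, vnorm (f i) = a i.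

Definition cons_seq (R : Type) (k : nat) (c : R) (a : 'I_k -> R) : 'I_k.+1 -> R :=
  fun i => if unlift ord0 i is Some j then a j else c.

(* A nonnegative sequence (c_i) is a tight frame set for H_n exactly when
   0 < \sum_i c_i^2 and n c_j^2 <= \sum_i c_i^2 for every j.  Necessity: testing
   the frame identity on the basis vectors gives \sum_i ||f_i||^2 = n lam, and
   testing it on f_j gives ||f_j||^4 <= lam ||f_j||^2.  Sufficiency: squared
   norms w_i in [0, lam] with \sum_i w_i = n lam are realized by a real tight
   family, by induction on the number of weights.  Two weights with
   x + y <= lam merge into one vector, which is then split into two parallel
   ones; otherwise the excess x + y - lam is realized in dimension n - 1 and
   the two vectors are completed by one extra coordinate, chosen so that they
   stay orthogonal in it ("spectral tetris").
   Applied to (b, a_2, ..., a_k), the condition for b is the upper bound on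
   b^2 and the conditions for the a_j, through their maximum, the lower one. *)

From HB Require Import structures.
From mathcomp Require Import all_boot all_order all_algebra.
From mathcomp Require Import reals complex.
From mathcomp Require Import ring lra.
Import Order.TTheory GRing.Theory Num.Theory.
Local Open Scope ring_scope.
Set Implicit Arguments. Unset Strict Implicit. Unset Printing Implicit Defensive.

Section RealTightFamilies.
Variable R : rcfType.
Implicit Types (lam x y : R) (s : seq R).

Definition sqnorm n (v : 'cV[R]_n) : R := \sum_j v j 0 ^+ 2.

Definition tight_seq n lam (G : seq 'cV[R]_n) : Prop :=
  forall i j, \sum_(v <- G) v i 0 * v j 0 = lam * (i == j)%:R.

Definition tight_sqnorms n lam s : Prop :=
  exists G : seq 'cV[R]_n, map (@sqnorm n) G = s /\ tight_seq lam G.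

Definition ext_col n (a : R) (v : 'cV[R]_n) : 'cV[R]_n.+1 :=
  \col_i (if unlift ord0 i is Some j then v j 0 else a).

Lemma ext_col0 n a (v : 'cV[R]_n) : ext_col a v ord0 0 = a.
Proof. by rewrite mxE unlift_none. Qed.

Lemma ext_colS n a (v : 'cV[R]_n) j : ext_col a v (lift ord0 j) 0 = v j 0.
Proof. by rewrite mxE liftK. Qed.

Lemma sqnormZ n c (v : 'cV[R]_n) : sqnorm (c *: v) = c ^+ 2 * sqnorm v.
Proof. by rewrite /sqnorm mulr_sumr; apply: eq_bigr => j _; rewrite mxE exprMn. Qed.

Lemma sqnorm_ext_col n a (v : 'cV[R]_n) : sqnorm (ext_col a v) = a ^+ 2 + sqnorm v.
Proof.
by rewrite /sqnorm big_ord_recl ext_col0; under eq_bigr do rewrite ext_colS.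
Qed.

Lemma tight_seq_quadratic n lam (G : seq 'cV[R]_n) (X : 'I_n -> R) :
  tight_seq lam G -> \sum_(v <- G) (\sum_j X j * v j 0) ^+ 2 = lam * \sum_j X j ^+ 2.
Proof.
move=> tG.
transitivity (\sum_j \sum_l X j * X l * \sum_(v <- G) v j 0 * v l 0).
  under eq_bigr do rewrite expr2 big_distrlr.
  rewrite [LHS]exchange_big; apply: eq_bigr => j _; rewrite [LHS]exchange_big.
  by apply: eq_bigr => l _; rewrite mulr_sumr; apply: eq_bigr => v _; rewrite /= mulrACA.
rewrite mulr_sumr; apply: eq_bigr => j _; under eq_bigr do rewrite tG.
rewrite (bigD1 j) //= big1 => [|l lj]; last by rewrite eq_sym (negbTE lj) !mulr0.
by rewrite eqxx addr0 mulr1 mulrC expr2.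
Qed.

Lemma tight_sqnorms_degenerate n lam s :
  (forall w, w \in s -> 0 <= w <= lam) -> \sum_(w <- s) w = n%:R * lam ->
  lam = 0 \/ n = 0%N -> tight_sqnorms n lam s.
Proof.
move=> s_bnd s_sum lam_n0.
have s0 : s = nseq (size s) 0.
  apply/all_pred1P/allP => w ws /=; case: lam_n0 => [lam0|n0].
    by have := s_bnd w ws; rewrite lam0 -eq_le eq_sym.
  have /eqP := s_sum; rewrite n0 mul0r big_seq psumr_eq0 => [/allP/(_ w ws)|v vs].
    by rewrite ws.
  by case/andP: (s_bnd v vs).
exists (nseq (size s) 0); split; first by rewrite map_nseq [RHS]s0 /sqnorm big1 // => j _; rewrite mxE expr0n.
move=> i j; case: lam_n0 => [->|n0]; last by subst n; case: i.
by rewrite mul0r big1_seq // => v /nseqP[-> _]; rewrite mxE mul0r.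
Qed.

Lemma tight_sqnorms1 lam : 0 <= lam -> tight_sqnorms 1 lam [:: lam].
Proof.
move=> lam_ge0; exists [:: const_mx (Num.sqrt lam)]; split.
  by rewrite /= /sqnorm big_ord1 mxE sqr_sqrtr.
by move=> i j; rewrite big_seq1 !ord1 !mxE -expr2 sqr_sqrtr // mulr1.
Qed.

Lemma tight_seq_split n lam c d (g : 'cV[R]_n) G :
  c ^+ 2 + d ^+ 2 = 1 -> tight_seq lam (g :: G) -> tight_seq lam (c *: g :: d *: g :: G).
Proof.
move=> cd1 gG i j; rewrite -gG !big_cons !mxE addrA; congr (_ + _).
by rewrite -[RHS]mul1r -cd1; ring.
Qed.

Lemma split_coeffs x y : 0 <= x -> 0 <= y ->
  exists c d, [/\ c ^+ 2 + d ^+ 2 = 1, c ^+ 2 * (x + y) = x & d ^+ 2 * (x + y) = y].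
Proof.
move=> x_ge0 y_ge0; have [xy0|xy_neq0] := eqVneq (x + y) 0.
  by exists 1, 0; rewrite xy0 !mulr0; split; lra.
have xy_ge0 : 0 <= x / (x + y) /\ 0 <= y / (x + y) by split; rewrite divr_ge0 ?addr_ge0.
exists (Num.sqrt (x / (x + y))), (Num.sqrt (y / (x + y))).
rewrite !sqr_sqrtr ?xy_ge0.1 ?xy_ge0.2 // !divfK //; split => //.
by rewrite -mulrDl divff.
Qed.

Lemma tight_sqnorms_merge n lam x y s : 0 <= x -> 0 <= y ->
  tight_sqnorms n lam (x + y :: s) -> tight_sqnorms n lam [:: x, y & s].
Proof.
move=> x_ge0 y_ge0 [[|g G] [] //= -[gxy Gs] gG].
have [c [d [cd1 cx dy]]] := split_coeffs x_ge0 y_ge0.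
exists [:: c *: g, d *: g & G]; split; last exact: tight_seq_split.
by rewrite /= !sqnormZ gxy cx dy Gs.
Qed.

Lemma tight_seq_ext_col n lam alpha beta c d (g : 'cV[R]_n) G :
  alpha ^+ 2 + beta ^+ 2 = lam -> c ^+ 2 + d ^+ 2 = 1 -> alpha * c + beta * d = 0 ->
  tight_seq lam (g :: G) ->
  tight_seq lam [:: ext_col alpha (c *: g), ext_col beta (d *: g) & map (ext_col 0) G].
Proof.
move=> ab_lam cd1 orth gG i j; rewrite !big_cons big_map.
case: (unliftP ord0 i) => [i'|] ->; case: (unliftP ord0 j) => [j'|] ->.
- rewrite !ext_colS !mxE (inj_eq lift_inj) -gG big_cons addrA.
  under eq_bigr do rewrite !ext_colS.
  by congr (_ + _); rewrite -[RHS]mul1r -cd1; ring.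
- rewrite !ext_colS !ext_col0 !mxE eq_sym (negbTE (neq_lift _ _)) mulr0.
  rewrite big1 => [|v _]; last by rewrite ext_col0 mulr0.
  by rewrite addr0 -[RHS](mulr0 (g i' 0)) -orth; ring.
- rewrite !ext_colS !ext_col0 !mxE (negbTE (neq_lift _ _)) mulr0.
  rewrite big1 => [|v _]; last by rewrite ext_col0 mul0r.
  by rewrite addr0 -[RHS](mulr0 (g j' 0)) -orth; ring.
- rewrite !ext_col0 eqxx mulr1 big1 => [|v _]; last by rewrite ext_col0 mulr0.
  by rewrite addr0 -ab_lam !expr2.
Qed.

(* [p] solves [p (x - p) = (lam - p) (y - lam + p)]; when the denominator
   vanishes, [x = y = lam] and the value [p = 0] given by [_ / 0 = 0] works. *)
Lemma tetris_coeffs lam x y :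
  0 < lam -> 0 <= x <= lam -> 0 <= y <= lam -> lam < x + y ->
  exists alpha beta c d,
    [/\ alpha ^+ 2 + beta ^+ 2 = lam, c ^+ 2 + d ^+ 2 = 1, alpha * c + beta * d = 0,
        alpha ^+ 2 + c ^+ 2 * (x + y - lam) = x & beta ^+ 2 + d ^+ 2 * (x + y - lam) = y].
Proof.
move=> lam_gt0 /andP[x_ge0 x_le] /andP[y_ge0 y_le] lam_lt.
set mu := x + y - lam; have mu_gt0 : 0 < mu by rewrite /mu; lra.
set p := lam * (lam - y) / (2 * lam - x - y).
have [p_ge0 p_lex lam_p_ge0 p_y_ge0 p_eq] :
    [/\ 0 <= p, p <= x, p <= lam, lam - y <= p & p * (x - p) = (lam - p) * (y - lam + p)].
  have [D0|D_neq0] := eqVneq (2 * lam - x - y) 0.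
    have [-> ->] : x = lam /\ y = lam by split; lra.
    by rewrite /p D0 invr0 mulr0; split; lra.
  have D_gt0 : 0 < 2 * lam - x - y by rewrite lt_neqAle eq_sym D_neq0 /=; lra.
  have pD : p * (2 * lam - x - y) = lam * (lam - y) by rewrite /p divfK.
  have p_ge0 : 0 <= p by rewrite /p divr_ge0 ?(ltW D_gt0) // mulr_ge0 //; lra.
  have p_lex : p <= x by rewrite -(ler_pM2r D_gt0) pD; nra.
  have p_gey : lam - y <= p by rewrite -(ler_pM2r D_gt0) pD; nra.
  split=> //; first lra.
  apply/eqP; rewrite -subr_eq0.
  have -> : p * (x - p) - (lam - p) * (y - lam + p) = lam * (lam - y) - p * (2 * lam - x - y)
    by ring.
  by rewrite pD subrr.
have cx_ge0 : 0 <= (x - p) / mu by rewrite divr_ge0 ?subr_ge0 // ltW.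
have dy_ge0 : 0 <= (y - lam + p) / mu by rewrite divr_ge0 ?(ltW mu_gt0) //; lra.
exists (Num.sqrt p), (Num.sqrt (lam - p)),
  (Num.sqrt ((x - p) / mu)), (- Num.sqrt ((y - lam + p) / mu)).
rewrite sqrrN !sqr_sqrtr ?subr_ge0 // !divfK ?gt_eqF //; split; try lra.
- rewrite -mulrDl (_ : x - p + (y - lam + p) = mu) ?divff ?gt_eqF //.
  by rewrite /mu; ring.
- by rewrite mulrN -!sqrtrM ?subr_ge0 // !mulrA p_eq subrr.
Qed.

Lemma tight_sqnorms_tetris n lam x y s :
  0 < lam -> 0 <= x <= lam -> 0 <= y <= lam -> lam < x + y ->
  tight_sqnorms n lam (x + y - lam :: s) -> tight_sqnorms n.+1 lam [:: x, y & s].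
Proof.
move=> lam_gt0 x_bnd y_bnd lam_lt [[|g G] [] //= -[g_mu Gs] gG].
have [alpha [beta [c [d [ab_lam cd1 orth cx dy]]]]] := tetris_coeffs lam_gt0 x_bnd y_bnd lam_lt.
exists [:: ext_col alpha (c *: g), ext_col beta (d *: g) & map (ext_col 0) G].
split; last exact: tight_seq_ext_col.
rewrite /= !sqnorm_ext_col !sqnormZ g_mu cx dy -Gs -map_comp.
by congr [:: _, _ & _]; apply: eq_map => v /=; rewrite sqnorm_ext_col expr0n add0r.
Qed.

Lemma tight_sqnorms_of_bounded n lam s :
  0 <= lam -> (forall w, w \in s -> 0 <= w <= lam) -> \sum_(w <- s) w = n%:R * lam ->
  tight_sqnorms n lam s.
Proof.
move=> lam_ge0; have [N] := ubnP (size s); elim: N n s => // N IH n s s_lt s_bnd s_sum.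
have [lam0|lam_neq0] := eqVneq lam 0; first exact: tight_sqnorms_degenerate (or_introl lam0).
have lam_gt0 : 0 < lam by rewrite lt_neqAle eq_sym lam_neq0.
case: n s_sum => [|n] s_sum; first exact: tight_sqnorms_degenerate (or_intror erefl).
case: s s_lt s_bnd s_sum => [|x [|y s]] s_lt s_bnd s_sum.
- move: s_sum; rewrite big_nil => /esym/eqP.
  by rewrite mulf_eq0 pnatr_eq0 (negbTE lam_neq0).
- have /andP[_ x_le] := s_bnd x (mem_head _ _).
  move: s_sum; rewrite big_seq1; case: n => [|n] x_eq.
    by rewrite x_eq mul1r; exact: tight_sqnorms1.
  have : 2%:R * lam <= n.+2%:R * lam by rewrite ler_pM2r // ler_nat.
  lra.
have /andP[x_ge0 x_le] := s_bnd x (mem_head _ _).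
have /andP[y_ge0 y_le] : 0 <= y <= lam by apply: s_bnd; rewrite !inE eqxx orbT.
have s_bnd' w : w \in s -> 0 <= w <= lam by move=> ws; apply: s_bnd; rewrite !inE ws !orbT.
rewrite !big_cons addrA in s_sum.
have [xy_le|lam_lt] := lerP (x + y) lam.
- apply: tight_sqnorms_merge => //; apply: IH => //.
    by move=> w; rewrite inE => /predU1P[->|/s_bnd' //]; apply/andP; split; lra.
  by rewrite big_cons.
- apply: tight_sqnorms_tetris; rewrite ?x_ge0 ?y_ge0 //; apply: IH => //.
    by move=> w; rewrite inE => /predU1P[->|/s_bnd' //]; apply/andP; split; lra.
  by move: s_sum; rewrite big_cons -addn1 natrD mulrDl mul1r; lra.
Qed.
End RealTightFamilies.

Section ComplexFrames.
Local Open Scope complex_scope.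
Variable R : realType.
Implicit Types (z : R[i]) (r : R).

Lemma sqmod_ge0 z : 0 <= sqmod z.
Proof. by rewrite addr_ge0 ?sqr_ge0. Qed.

Lemma sqmod_conj z : sqmod z^* = sqmod z.
Proof. by case: z => a b; rewrite /sqmod /= sqrrN. Qed.

Lemma sqmod_real r : sqmod r%:C = r ^+ 2.
Proof. by rewrite /sqmod /= expr0n addr0. Qed.

Lemma mulc_conj z : z * z^* = (sqmod z)%:C.
Proof. by case: z => a b; rewrite /sqmod /=; congr Complex; ring. Qed.

Lemma vnorm_sq n (x : 'cV[R[i]]_n) : vnorm x ^+ 2 = \sum_j sqmod (x j 0).
Proof. by rewrite sqr_sqrtr // sumr_ge0 // => j _; apply: sqmod_ge0. Qed.

Lemma cdotvv n (x : 'cV[R[i]]_n) : cdot x x = (vnorm x ^+ 2)%:C.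
Proof. by rewrite vnorm_sq rmorph_sum; apply: eq_bigr => j _; apply: mulc_conj. Qed.

Lemma cdot_delta n j (x : 'cV[R[i]]_n) : cdot (delta_mx j 0) x = (x j 0)^*.
Proof.
rewrite /cdot (bigD1 j) //= big1 => [|l lj]; last by rewrite mxE (negbTE lj) mul0r.
by rewrite mxE !eqxx mul1r addr0.
Qed.

Lemma vnorm_delta n (j : 'I_n) : vnorm (delta_mx j 0 : 'cV[R[i]]_n) = 1.
Proof.
rewrite -[RHS]sqrtr1 /vnorm (bigD1 j) //= big1 => [|l lj]; last first.
  by rewrite mxE (negbTE lj) sqmod_real expr0n.
by rewrite mxE !eqxx sqmod_real expr1n addr0.
Qed.

Lemma in_Hn_delta real n (j : 'I_n) : in_Hn real (delta_mx j 0 : 'cV[R[i]]_n).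
Proof. by move=> _ l; rewrite mxE; case: (_ && _). Qed.

Lemma sqmod_cdot_real n (x : 'cV[R[i]]_n) (v : 'cV[R]_n) :
  sqmod (cdot x (map_mx (fun r => r%:C) v)) =
  (\sum_j complex.Re (x j 0) * v j 0) ^+ 2 + (\sum_j complex.Im (x j 0) * v j 0) ^+ 2.
Proof.
rewrite /sqmod /cdot (raddf_sum (@complex.Re R : Rcomplex R -> R)).
rewrite (raddf_sum (@complex.Im R : Rcomplex R -> R)).
by congr (_ ^+ 2 + _ ^+ 2); apply: eq_bigr => j _; rewrite mxE conjc_real;
  case: (x j 0) => a b /=; ring.
Qed.

Section FrameBound.
Variables (real : bool) (n k : nat) (f : 'I_k -> 'cV[R[i]]_n) (lam : R).
Hypothesis lam_ge0 : 0 <= lam.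
Hypothesis f_in : forall i, in_Hn real (f i).
Hypothesis f_tight :
  forall x, in_Hn real x -> \sum_i sqmod (cdot x (f i)) = lam * vnorm x ^+ 2.

Lemma tight_frame_sum_vnorm : \sum_i vnorm (f i) ^+ 2 = n%:R * lam.
Proof.
have col_sum j : \sum_i sqmod (f i j 0) = lam.
  have := f_tight (in_Hn_delta j); rewrite vnorm_delta expr1n mulr1 => <-.
  by apply: eq_bigr => i _; rewrite cdot_delta sqmod_conj.
under eq_bigr do rewrite vnorm_sq.
rewrite exchange_big /=; under eq_bigr do rewrite col_sum.
by rewrite sumr_const card_ord mulr_natl.
Qed.

Lemma tight_frame_vnorm_le i : vnorm (f i) ^+ 2 <= lam.
Proof.
have := f_tight (f_in i); rewrite (bigD1 i) //= cdotvv sqmod_real.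
set t := vnorm (f i) ^+ 2; set rest := \sum_(l | _) _ => eq_lam.
have rest_ge0 : 0 <= rest by apply: sumr_ge0 => l _; apply: sqmod_ge0.
have [->|t_neq0] := eqVneq t 0; first exact: lam_ge0.
have t_gt0 : 0 < t by rewrite lt_neqAle eq_sym t_neq0 sqr_ge0.
by rewrite -(ler_pM2r t_gt0) -expr2; lra.
Qed.
End FrameBound.
End ComplexFrames.

Section TightFrameSets.
Variable R : realType.

Lemma tight_frame_set_ineq real n k (c : 'I_k -> R) :
  (0 < n)%N -> tight_frame_set real n c ->
  0 < \sum_i c i ^+ 2 /\ forall i, n%:R * c i ^+ 2 <= \sum_i c i ^+ 2.
Proof.
move=> n_gt0 [_ [f [[f_in [lam [lam_gt0 f_tight]]] f_c]]].
have sum_c : \sum_i c i ^+ 2 = n%:R * lam.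
  by rewrite -(tight_frame_sum_vnorm f_tight); apply: eq_bigr => i _; rewrite f_c.
rewrite sum_c; split=> [|i]; first by rewrite mulr_gt0 ?ltr0n.
by rewrite ler_pM2l ?ltr0n // -f_c (tight_frame_vnorm_le (ltW lam_gt0) f_in f_tight).
Qed.

Lemma tight_frame_set_of_ineq real n k (c : 'I_k -> R) :
  (0 < n)%N -> (forall i, 0 <= c i) -> 0 < \sum_i c i ^+ 2 ->
  (forall i, n%:R * c i ^+ 2 <= \sum_i c i ^+ 2) -> tight_frame_set real n c.
Proof.
move=> n_gt0 c_ge0 sum_gt0 c_le.
set lam := (\sum_i c i ^+ 2) / n%:R.
have n_pos : 0 < n%:R :> R by rewrite ltr0n.
have [G [G_c G_tight]] : tight_sqnorms n lam [seq c i ^+ 2 | i <- enum 'I_k].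
  apply: tight_sqnorms_of_bounded; first by rewrite divr_ge0 ?ltW.
    by move=> w /mapP[i _ ->]; rewrite sqr_ge0 /= ler_pdivlMr // mulrC c_le.
  by rewrite big_map big_enum /= mulrC divfK ?gt_eqF.
have size_G : size G = k by rewrite -(size_map (@sqnorm _ n)) G_c size_map size_enum_ord.
pose v (i : 'I_k) := nth 0 G i.
have v_c i : sqnorm (v i) = c i ^+ 2.
  by rewrite -(nth_map 0 0) ?size_G // G_c (nth_map i) ?size_enum_ord // nth_ord_enum.
have sum_v (F : 'cV[R]_n -> R) : \sum_i F (v i) = \sum_(w <- G) F w.
  by rewrite (big_nth 0) size_G big_mkord.
split=> //; exists (fun i => map_mx (fun r => r%:C)%C (v i)); split; last first.
  move=> i; rewrite /vnorm; under eq_bigr do rewrite mxE sqmod_real.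
  by rewrite -/(sqnorm (v i)) v_c sqrtr_sqr ger0_norm.
split; first by move=> i _ j; rewrite mxE.
exists lam; split; first by rewrite divr_gt0.
move=> x _; rewrite (sum_v (fun w => sqmod (cdot x (map_mx (fun r => r%:C)%C w)))).
under eq_bigr do rewrite sqmod_cdot_real.
by rewrite big_split /= !(tight_seq_quadratic _ G_tight) vnorm_sq -mulrDr -big_split.
Qed.

Lemma tight_frame_setP real n k (c : 'I_k -> R) : (0 < n)%N ->
  tight_frame_set real n c <->
  [/\ forall i, 0 <= c i, 0 < \sum_i c i ^+ 2 & forall i, n%:R * c i ^+ 2 <= \sum_i c i ^+ 2].
Proof.
move=> n_gt0; split=> [c_tight|[]]; last exact: tight_frame_set_of_ineq.
by have [] := tight_frame_set_ineq n_gt0 c_tight; split=> //; case: c_tight.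
Qed.
End TightFrameSets.

Lemma cons_seq0 (T : Type) k (c : T) (a : 'I_k -> T) : cons_seq c a ord0 = c.
Proof. by rewrite /cons_seq unlift_none. Qed.

Lemma cons_seqS (T : Type) k (c : T) (a : 'I_k -> T) i : cons_seq c a (lift ord0 i) = a i.
Proof. by rewrite /cons_seq liftK. Qed.

Lemma sum_cons_seq (T : Type) (V : nmodType) k (c : T) (a : 'I_k -> T) (F : T -> V) :
  \sum_i F (cons_seq c a i) = F c + \sum_i F (a i).
Proof. by rewrite big_ord_recl cons_seq0; under eq_bigr do rewrite cons_seqS. Qed.

Lemma tight_frame_set_consP (R : realType) real n k (c : R) (a : 'I_k -> R) :
  (0 < n)%N ->
  tight_frame_set real n (cons_seq c a) <->
  [/\ 0 <= c /\ (forall i, 0 <= a i), 0 < c ^+ 2 + \sum_i a i ^+ 2,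
      n%:R * c ^+ 2 <= c ^+ 2 + \sum_i a i ^+ 2 &
      forall i, n%:R * a i ^+ 2 <= c ^+ 2 + \sum_i a i ^+ 2].
Proof.
move=> n_gt0; rewrite tight_frame_setP // (sum_cons_seq _ _ (fun x => x ^+ 2)).
split=> [[ca_ge0 sum_gt0 ca_le]|[[c_ge0 a_ge0] sum_gt0 c_le a_le]].
  split=> //; first split.
  - by have := ca_ge0 ord0; rewrite cons_seq0.
  - by move=> i; have := ca_ge0 (lift ord0 i); rewrite cons_seqS.
  - by have := ca_le ord0; rewrite cons_seq0.
  - by move=> i; have := ca_le (lift ord0 i); rewrite cons_seqS.
by split=> // i; case: (unliftP ord0 i) => [j|] ->; rewrite ?cons_seq0 ?cons_seqS.
Qed.

Unset Implicit Arguments.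

Theorem theorem4p2 (R : realType) (real : bool) (n k : nat) (a1 : R)
    (a : 'I_k -> R) (b : R) :
  (2 <= n)%N ->
  tight_frame_set real n (cons_seq a1 a) ->
  0 <= b ->
  (tight_frame_set real n (cons_seq b a) <->
   (n%:R * (\big[Num.max/0]_(i < k) a i ^+ 2) - \sum_(i < k) a i ^+ 2 <= b ^+ 2
    /\ b ^+ 2 <= (\sum_(i < k) a i ^+ 2) / (n.-1)%:R)).
Proof.
move=> n_ge2; have n_gt0 : (0 < n)%N by apply: ltnW.
have n_pred : n%:R = (n.-1)%:R + 1 :> R by rewrite natr1 prednK.
have n1_gt0 : 0 < (n.-1)%:R :> R by rewrite ltr0n -ltnS prednK.
rewrite !tight_frame_set_consP //.
set S := \sum_i a i ^+ 2; set m := \big[Num.max/0]_i a i ^+ 2.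
move=> [[_ a_ge0] sum1_gt0 a1_le _] b_ge0.
have S_gt0 : 0 < S by have := sqr_ge0 a1; nra.
have m_ge i : a i ^+ 2 <= m := le_bigmax _ _ i.
rewrite ler_pdivlMr //.
split=> [[_ sum_gt0 b_le a_le]|[m_le b_le]].
  have : m <= (b ^+ 2 + S) / n%:R.
    apply: bigmax_le => [|i _]; first by rewrite divr_ge0 ?ler0n ?ltW.
    by rewrite ler_pdivlMr ?ltr0n // mulrC a_le.
  by rewrite ler_pdivlMr ?ltr0n //; nra.
have sqb_ge0 := sqr_ge0 b.
split=> [|||i]; [by [] | lra | rewrite n_pred; nra |].
by have := ler_wpM2l (ler0n _ n) (m_ge i); lra.
Qed.
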